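(* Let $\mu^\ast$ be an upper quasi-density on $\mathbb{H}$, fix $k\in\mathbb{N}^+$, and let $h_1,\dots,h_n\in\mathbb{N}$ be such that $h_i\not\equiv h_j \pmod k$ for $1\le i<j\le n$. Set $\mathcal{H}:=\{h_1,\dots,h_n\}$ and $\mathcal{V}_{k,\mathcal{H}}:=\bigcup_{h\in\mathcal{H}}(k\cdot\mathbb{H}+h)$. Then for every finite $\mathcal{V}\subseteq\mathbb{H}$, $\mu^\ast(\mathcal{V}_{k,\mathcal{H}}\cup\mathcal{V})=\frac nk$ and $\mu^\ast(\mathcal{V}_{k,\mathcal{H}}\setminus\mathcal{V})\ge\frac nk$.
   Context: $\mathbb{N}=\{0,1,2,\dots\}$, $\mathbb{N}^+=\{1,2,\dots\}$; $\mathbb{H}$ is one of $\mathbb{Z},\mathbb{N},\mathbb{N}^+$. For $X\subseteq\mathbb{H}$, $k\in\mathbb{N}^+$, $h\in\mathbb{N}$, $k\cdot X+h:=\{kx+h:x\in X\}$. An upper quasi-density on $\mathbb{H}$ is a function $\mu^\ast:\mathcal{P}(\mathbb{H})\to\mathbb{R}$ with $\mu^\ast(\mathbb{H})=1$, $\mu^\ast(X)\le1$ for all $X$, $\mu^\ast(X\cup Y)\le\mu^\ast(X)+\mu^\ast(Y)$ for all $X,Y$, and $\mu^\ast(k\cdot X+h)=\frac1k\mu^\ast(X)$ for all $X\subseteq\mathbb{H}$, $h,k\in\mathbb{N}^+$. *)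

From Stdlib Require Import Reals ZArith List.
Open Scope R_scope.

(* The three possible ambient sets H = Z, N, N^+, realised as subsets of Z. *)
Inductive HKind : Type := HZ | HN | HNpos.

Definition carrier (H : HKind) (z : Z) : Prop :=
  match H with
  | HZ => True
  | HN => (0 <= z)%Z
  | HNpos => (1 <= z)%Z
  end.

Definition subsetH (H : HKind) (X : Z -> Prop) : Prop :=
  forall z, X z -> carrier H z.

Definition setU (X Y : Z -> Prop) : Z -> Prop := fun z => X z \/ Y z.
Definition setD (X Y : Z -> Prop) : Z -> Prop := fun z => X z /\ ~ Y z.

Definition dil (k h : Z) (X : Z -> Prop) : Z -> Prop :=
  fun z => exists x, X x /\ z = (k * x + h)%Z.

Definition finite_set (V : Z -> Prop) : Prop :=
  exists l : list Z, forall z, V z <-> In z l.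

(* Upper quasi-density on H: only its values on subsets of H matter. *)
Definition upper_quasi_density (H : HKind) (mu : (Z -> Prop) -> R) : Prop :=
  mu (carrier H) = 1 /\
  (forall X, subsetH H X -> mu X <= 1) /\
  (forall X Y, subsetH H X -> subsetH H Y -> mu (setU X Y) <= mu X + mu Y) /\
  (forall X (h k : Z), subsetH H X -> (1 <= h)%Z -> (1 <= k)%Z ->
      mu (dil k h X) = mu X / IZR k).

Definition Vkh (H : HKind) (k : Z) (n : nat) (h : nat -> Z) : Z -> Prop :=
  fun z => exists i, (i < n)%nat /\ dil k (h i) (carrier H) z.

(* Write W for V_{k,H}.  Its pieces k.H + h_i each have density at most 1/k
   (exactly 1/k if h_i >= 1, and k.H + 0 differs from k.H + k by one point),
   so mu(W) <= n/k by subadditivity.  Conversely, since the h_i are pairwise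
   incongruent mod k, only k - n residues mod k are missed by W, and H is
   covered by W, the k - n classes k.H + r of the missed residues, and a
   finite interval.  Finite sets are null (a singleton {a} has the same
   density as its translate {2a+1} = 2.{a} + 1, which has half of it), so
   1 <= mu(X) + (k - n)/k for every X that agrees with W up to a finite set. *)

From Stdlib Require Import Reals ZArith List Lra Lia.
From Stdlib Require Import Classical FunctionalExtensionality PropExtensionality.
Open Scope R_scope.

Lemma pred_ext (X Y : Z -> Prop) : (forall z, X z <-> Y z) -> X = Y.
Proof.
  intro E; apply functional_extensionality; intro z.
  apply propositional_extensionality, E.
Qed.

Definition set0 : Z -> Prop := fun _ => False.
Definition sing (a : Z) : Z -> Prop := fun z => z = a.
Definition bigcup {A : Type} (l : list A) (F : A -> Z -> Prop) : Z -> Prop :=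
  fun z => exists a, In a l /\ F a z.
Definition resclass (H : HKind) (k r : Z) : Z -> Prop := dil k r (carrier H).

(* The least element of H; for H = Z the value is arbitrary. *)
Definition carrier_min (H : HKind) : Z :=
  match H with HNpos => 1%Z | _ => 0%Z end.

Lemma carrier_ge_min H z : (carrier_min H <= z)%Z -> carrier H z.
Proof. destruct H; simpl; trivial. Qed.

Lemma resclass_sub H k r : (1 <= k)%Z -> (0 <= r)%Z -> subsetH H (resclass H k r).
Proof. intros hk hr z [x [Hx ->]]; destruct H; simpl in *; trivial; nia. Qed.

Lemma resclass_or_small H k q r z : (1 <= k)%Z -> carrier H z -> z = (k * q + r)%Z ->
  resclass H k r z \/ (carrier_min H <= z <= r)%Z.
Proof.
  intros hk Hz ->.
  destruct (classic (carrier H q)) as [Hq | Hq]; [left; exists q; auto | right].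
  destruct H; simpl in *; [contradiction Hq; exact I | nia | nia].
Qed.

Lemma dil_sing k d a : dil k d (sing a) = sing (k * a + d).
Proof.
  apply pred_ext; intro z; unfold dil, sing; split.
  - now intros [x [-> ->]].
  - intros ->; now exists a.
Qed.

Lemma bigcup_nil {A} (F : A -> Z -> Prop) : bigcup nil F = set0.
Proof. apply pred_ext; intro z; unfold bigcup, set0; simpl; firstorder. Qed.

Lemma bigcup_cons {A} a l (F : A -> Z -> Prop) :
  bigcup (a :: l) F = setU (F a) (bigcup l F).
Proof.
  apply pred_ext; intro z; unfold bigcup, setU; simpl; split.
  - intros [b [[<- | Hb] Fb]]; [left | right; exists b]; auto.
  - intros [Fa | [b [Hb Fb]]]; [exists a | exists b]; auto.
Qed.

Lemma bigcup_sub H {A} (l : list A) F :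
  (forall a, In a l -> subsetH H (F a)) -> subsetH H (bigcup l F).
Proof. intros HF z [a [Ha Fa]]; exact (HF a Ha z Fa). Qed.

Lemma Vkh_bigcup H k n h :
  Vkh H k n h = bigcup (seq 0 n) (fun i => resclass H k (h i)).
Proof.
  apply pred_ext; intro z; unfold Vkh, bigcup; split;
    intros [i [Hi Hz]]; exists i; rewrite in_seq in *; split; auto; lia.
Qed.

Lemma Vkh_sub H k n h : (1 <= k)%Z -> (forall i, (i < n)%nat -> (0 <= h i)%Z) ->
  subsetH H (Vkh H k n h).
Proof.
  intros hk hnat; rewrite Vkh_bigcup; apply bigcup_sub; intros i Hi.
  rewrite in_seq in Hi; apply resclass_sub, hnat; auto; lia.
Qed.

Lemma finite_setU X Y : finite_set X -> finite_set Y -> finite_set (setU X Y).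
Proof.
  intros [l1 E1] [l2 E2]; exists (l1 ++ l2); intro z.
  unfold setU; rewrite in_app_iff, E1, E2; tauto.
Qed.

Lemma interval_finite a b : finite_set (fun z => (a <= z <= b)%Z).
Proof.
  exists (map (fun j => a + Z.of_nat j)%Z (seq 0 (Z.to_nat (b - a + 1)))); intro z.
  rewrite in_map_iff; split.
  - intro Hz; exists (Z.to_nat (z - a)); rewrite in_seq; lia.
  - intros [j [<- Hj]]; rewrite in_seq in Hj; lia.
Qed.

Lemma exists_upper_bound (n : nat) (h : nat -> Z) :
  exists M, forall i, (i < n)%nat -> (h i <= M)%Z.
Proof.
  induction n as [| n [M HM]]; [exists 0%Z; lia |].
  exists (Z.max M (h n)); intros i Hi.
  destruct (Nat.eq_dec i n) as [-> | Ne]; [lia | specialize (HM i ltac:(lia)); lia].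
Qed.

Lemma length_filter_negb_add_le {A} (p : A -> bool) (l m : list A) :
  NoDup m -> incl m (filter p l) ->
  (length (filter (fun x => negb (p x)) l) + length m <= length l)%nat.
Proof.
  intros Hm Hincl.
  pose proof (NoDup_incl_length Hm Hincl); pose proof (filter_length p l); lia.
Qed.

Section Residues.

Variables (H : HKind) (k : Z) (n : nat) (h : nat -> Z).
Hypothesis hk : (1 <= k)%Z.

Definition residues : list Z := map Z.of_nat (seq 0 (Z.to_nat k)).
Definition hit (r : Z) : bool := existsb (fun i => (h i mod k =? r)%Z) (seq 0 n).
Definition missed_residues : list Z := filter (fun r => negb (hit r)) residues.

Lemma In_residues r : In r residues <-> (0 <= r < k)%Z.
Proof.
  unfold residues; rewrite in_map_iff; split.
  - intros [j [<- Hj]]; rewrite in_seq in Hj; lia.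
  - intro Hr; exists (Z.to_nat r); rewrite in_seq; lia.
Qed.

Lemma missed_residues_nonneg r : In r missed_residues -> (0 <= r)%Z.
Proof. unfold missed_residues; rewrite filter_In, In_residues; lia. Qed.

Lemma missed_classes_sub : subsetH H (bigcup missed_residues (resclass H k)).
Proof.
  apply bigcup_sub; intros r Hr; apply resclass_sub, missed_residues_nonneg; auto.
Qed.

Lemma length_missed_residues :
  (forall i j, (i < j)%nat -> (j < n)%nat -> ((h i - h j) mod k <> 0)%Z) ->
  (length missed_residues + n <= Z.to_nat k)%nat.
Proof.
  intro hdist; set (hs := map (fun i => h i mod k)%Z (seq 0 n)).
  assert (Lhs : length hs = n) by (unfold hs; now rewrite length_map, length_seq).
  assert (Lres : length residues = Z.to_nat k)
    by (unfold residues; now rewrite length_map, length_seq).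
  rewrite <- Lhs, <- Lres; apply length_filter_negb_add_le.
  - apply NoDup_map_NoDup_ForallPairs; [| apply seq_NoDup].
    intros i j Hi Hj Eij; rewrite in_seq in Hi, Hj.
    destruct (Nat.lt_trichotomy i j) as [Lt | [Eq | Gt]]; auto; exfalso.
    + apply (hdist i j Lt ltac:(lia)), Z.cong_iff_0, Eij.
    + apply (hdist j i Gt ltac:(lia)), Z.cong_iff_0; symmetry; exact Eij.
  - intros r Hr; apply in_map_iff in Hr as [i [<- Hi]]; apply filter_In; split.
    + apply In_residues, Z.mod_pos_bound; lia.
    + apply existsb_exists; exists i; split; [exact Hi | apply Z.eqb_refl].
Qed.

Lemma Vkh_cover : exists M, forall z, carrier H z ->
  Vkh H k n h z \/ bigcup missed_residues (resclass H k) z \/ (carrier_min H <= z <= M)%Z.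
Proof.
  destruct (exists_upper_bound n h) as [M HM].
  exists (Z.max M k); intros z Hz.
  pose proof (Z.mod_pos_bound z k ltac:(lia)) as Hr.
  destruct (hit (z mod k)) eqn:Ehit.
  - apply existsb_exists in Ehit as [i [Hi Ei]]; rewrite in_seq in Hi; apply Z.eqb_eq in Ei.
    assert (Hq : z = (k * ((z - h i) / k) + h i)%Z).
    { pose proof (Z_div_mod_eq_full (z - h i) k).
      assert (((z - h i) mod k)%Z = 0%Z) by (apply Z.cong_iff_0; auto); lia. }
    destruct (resclass_or_small H k _ _ z hk Hz Hq) as [Hc | Hs].
    + left; exists i; split; [lia | exact Hc].
    + right; right; specialize (HM i ltac:(lia)); lia.
  - destruct (resclass_or_small H k (z / k) (z mod k) z hk Hz (Z_div_mod_eq_full z k))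
      as [Hc | Hs]; [| right; right; lia].
    right; left; exists (z mod k)%Z; split; [| exact Hc].
    unfold missed_residues; rewrite filter_In, Ehit, In_residues; auto.
Qed.

End Residues.

Section Density.

Variables (H : HKind) (mu : (Z -> Prop) -> R).
Hypothesis Hmu : upper_quasi_density H mu.

Lemma mu_carrier : mu (carrier H) = 1.
Proof. apply Hmu. Qed.

Lemma mu_setU_le X Y : subsetH H X -> subsetH H Y -> mu (setU X Y) <= mu X + mu Y.
Proof. apply Hmu. Qed.

Lemma mu_dil X d k : subsetH H X -> (1 <= d)%Z -> (1 <= k)%Z ->
  mu (dil k d X) = mu X / IZR k.
Proof. apply Hmu. Qed.

Lemma mu_nonneg X : subsetH H X -> 0 <= mu X.
Proof.
  intro HX; pose proof (mu_setU_le X X HX HX) as S.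
  rewrite (pred_ext (setU X X) X) in S by (intro z; unfold setU; tauto); lra.
Qed.

Lemma mu_set0 : mu set0 = 0.
Proof.
  assert (E : dil 2 1 set0 = set0)
    by (apply pred_ext; intro z; unfold dil, set0; firstorder).
  pose proof (mu_dil set0 1 2 (fun z (f : set0 z) => match f with end) ltac:(lia) ltac:(lia)) as D.
  rewrite E in D; lra.
Qed.

Lemma mu_sing a : carrier H a -> mu (sing a) = 0.
Proof.
  assert (sing_sub : forall b, carrier H b -> subsetH H (sing b))
    by (intros b Hb z ->; exact Hb).
  assert (shift : forall b d, carrier H b -> (1 <= d)%Z -> mu (sing (b + d)) = mu (sing b)).
  { intros b d Hb Hd; replace (b + d)%Z with (1 * b + d)%Z by ring.
    rewrite <- dil_sing, mu_dil by (auto; lia); unfold Rdiv; rewrite Rinv_1; ring. }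
  assert (nonneg : forall b, carrier H b -> (0 <= b)%Z -> mu (sing b) = 0).
  { intros b Hb Hb0.
    assert (E : mu (sing (2 * b + 1)) = mu (sing b) / 2).
    { rewrite <- dil_sing; apply mu_dil; auto; lia. }
    replace (2 * b + 1)%Z with (b + (b + 1))%Z in E by ring.
    rewrite shift in E by (auto; lia); lra. }
  intro Ha; destruct (Z_le_gt_dec 0 a) as [Ha0 | Ha0]; [now apply nonneg |].
  assert (H0 : carrier H 0) by (destruct H; simpl in *; trivial; lia).
  rewrite <- (shift a (- a)%Z) by (auto; lia).
  replace (a + - a)%Z with 0%Z by ring; now apply nonneg.
Qed.

Lemma mu_bigcup_le {A} (l : list A) F c :
  (forall a, In a l -> subsetH H (F a)) -> (forall a, In a l -> mu (F a) <= c) ->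
  mu (bigcup l F) <= INR (length l) * c.
Proof.
  induction l as [| a l IH]; intros HF Hc.
  - rewrite bigcup_nil, mu_set0; simpl; lra.
  - rewrite bigcup_cons; cbn [length]; rewrite S_INR.
    assert (Ha : mu (F a) <= c) by (apply Hc; now left).
    assert (Hl : mu (bigcup l F) <= INR (length l) * c)
      by (apply IH; intros; [apply HF | apply Hc]; now right).
    pose proof (mu_setU_le (F a) (bigcup l F) (HF a (or_introl eq_refl))
                  (bigcup_sub H l F (fun b Hb => HF b (or_intror Hb)))).
    lra.
Qed.

Lemma mu_finite V : subsetH H V -> finite_set V -> mu V = 0.
Proof.
  intros HV [l E].
  assert (EV : V = bigcup l sing).
  { apply pred_ext; intro z; unfold bigcup, sing; rewrite E; split.
    - intro Hz; now exists z.
    - now intros [a [Ha ->]]. }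
  assert (Hl : forall a, In a l -> carrier H a) by (intros a Ha; apply HV, E, Ha).
  pose proof (mu_nonneg V HV) as N.
  pose proof (mu_bigcup_le l sing 0) as B.
  rewrite <- EV, Rmult_0_r in B.
  enough (mu V <= 0) by lra.
  apply B; intros a Ha; [intros z -> | rewrite mu_sing]; auto; lra.
Qed.

Lemma mu_resclass k r : (1 <= k)%Z -> (1 <= r)%Z -> mu (resclass H k r) = 1 / IZR k.
Proof. intros hk hr; unfold resclass; rewrite mu_dil, mu_carrier; auto; easy. Qed.

Lemma mu_resclass_le k r : (1 <= k)%Z -> (0 <= r)%Z -> mu (resclass H k r) <= 1 / IZR k.
Proof.
  intros hk hr; destruct (Z.eq_dec r 0) as [-> | Hr]; [| rewrite mu_resclass; lra || lia].
  set (a := (k * carrier_min H)%Z).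
  assert (Ha : carrier H a) by (apply carrier_ge_min; unfold a; destruct H; simpl; lia).
  assert (E : resclass H k 0 = setU (resclass H k k) (sing a)).
  { apply pred_ext; intro z; unfold resclass, dil, setU, sing, a; split.
    - intros [x [Hx ->]].
      destruct (Z.eq_dec x (carrier_min H)) as [-> | Ne]; [right; ring | left].
      exists (x - 1)%Z; split; [| ring]; destruct H; simpl in *; trivial; lia.
    - intros [[x [Hx ->]] | ->]; [exists (x + 1)%Z | exists (carrier_min H)];
        split; try ring; [| apply carrier_ge_min; lia].
      destruct H; simpl in *; trivial; lia. }
  rewrite E.
  assert (Hsing : subsetH H (sing a)) by (intros z ->; exact Ha).
  pose proof (mu_setU_le _ _ (resclass_sub H k k hk ltac:(lia)) Hsing) as S.
  rewrite mu_resclass, mu_sing in S by (auto; lia); lra.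
Qed.

Lemma mu_ge_of_cover X Y F :
  subsetH H X -> subsetH H Y -> subsetH H F -> finite_set F ->
  (forall z, carrier H z -> X z \/ Y z \/ F z) -> 1 - mu Y <= mu X.
Proof.
  intros HX HY HF Ffin Hcov.
  assert (E : carrier H = setU (setU X Y) F).
  { apply pred_ext; intro z; unfold setU; split; [intro Hz; specialize (Hcov z Hz); tauto |].
    intros [[Hz | Hz] | Hz]; auto. }
  assert (HXY : subsetH H (setU X Y)) by (intros z [Hz | Hz]; auto).
  pose proof (mu_setU_le _ _ HXY HF) as S1; pose proof (mu_setU_le _ _ HX HY) as S2.
  rewrite <- E, mu_carrier, (mu_finite F HF Ffin) in S1; lra.
Qed.

Lemma mu_Vkh_le k n h : (1 <= k)%Z -> (forall i, (i < n)%nat -> (0 <= h i)%Z) ->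
  mu (Vkh H k n h) <= INR n / IZR k.
Proof.
  intros hk hnat; rewrite Vkh_bigcup.
  eapply Rle_trans; [apply mu_bigcup_le with (c := 1 / IZR k) |].
  - intros i Hi; rewrite in_seq in Hi; apply resclass_sub, hnat; auto; lia.
  - intros i Hi; rewrite in_seq in Hi; apply mu_resclass_le, hnat; auto; lia.
  - rewrite length_seq; right; unfold Rdiv; ring.
Qed.

Lemma mu_missed_le k n h : (1 <= k)%Z ->
  (forall i j, (i < j)%nat -> (j < n)%nat -> ((h i - h j) mod k <> 0)%Z) ->
  mu (bigcup (missed_residues k n h) (resclass H k)) <= 1 - INR n / IZR k.
Proof.
  intros hk hdist.
  assert (HK : IZR k = INR (Z.to_nat k)) by (rewrite INR_IZR_INZ, Z2Nat.id by lia; easy).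
  assert (Kpos : 0 < INR (Z.to_nat k)) by (rewrite <- HK; apply IZR_lt; lia).
  assert (L : INR (length (missed_residues k n h)) <= INR (Z.to_nat k) - INR n).
  { pose proof (le_INR _ _ (length_missed_residues k n h hk hdist)); rewrite plus_INR in *; lra. }
  eapply Rle_trans; [apply mu_bigcup_le with (c := 1 / IZR k) |].
  - intros r Hr; apply resclass_sub, (missed_residues_nonneg k n h); auto.
  - intros r Hr; apply mu_resclass_le, (missed_residues_nonneg k n h); auto.
  - rewrite HK; replace (1 - INR n / INR (Z.to_nat k))
      with ((INR (Z.to_nat k) - INR n) * (1 / INR (Z.to_nat k))) by (field; lra).
    apply Rmult_le_compat_r; [apply Rlt_le, Rdiv_lt_0_compat |]; lra.
Qed.

End Density.

Theorem mainTheorem6 (H : HKind) (mu : (Z -> Prop) -> R)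
  (Hmu : upper_quasi_density H mu)
  (k : Z) (hk : (1 <= k)%Z)
  (n : nat) (h : nat -> Z)
  (hnat : forall i, (i < n)%nat -> (0 <= h i)%Z)
  (hdist : forall i j, (i < j)%nat -> (j < n)%nat -> ((h i - h j) mod k <> 0)%Z) :
  forall V : Z -> Prop, subsetH H V -> finite_set V ->
    mu (setU (Vkh H k n h) V) = INR n / IZR k /\
    mu (setD (Vkh H k n h) V) >= INR n / IZR k.
Proof.
  intros V HV Vfin.
  destruct (Vkh_cover H k n h hk) as [M Hcov].
  pose proof (Vkh_sub H k n h hk hnat) as HW; pose proof (missed_classes_sub H k n h hk) as HB.
  pose proof (mu_Vkh_le H mu Hmu k n h hk hnat) as upper.
  pose proof (mu_missed_le H mu Hmu k n h hk hdist) as missed.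
  set (W := Vkh H k n h) in *; set (B := bigcup (missed_residues k n h) (resclass H k)) in *.
  set (I := fun z => (carrier_min H <= z <= M)%Z).
  assert (HI : subsetH H I) by (intros z Hz; apply carrier_ge_min, Hz).
  split.
  - pose proof (mu_setU_le H mu Hmu W V HW HV) as S.
    rewrite (mu_finite H mu Hmu V HV Vfin) in S.
    enough (1 - mu B <= mu (setU W V)) by lra.
    apply (mu_ge_of_cover H mu Hmu (setU W V) B I);
      [intros z [Hz | Hz]; auto | exact HB | exact HI | apply interval_finite |].
    intros z Hz; unfold setU; destruct (Hcov z Hz) as [? | [? | ?]]; auto.
  - enough (1 - mu B <= mu (setD W V)) by lra.
    apply (mu_ge_of_cover H mu Hmu (setD W V) B (setU V I));
      [intros z [Hz _]; auto | exact HB | intros z [Hz | Hz]; auto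
      | apply finite_setU; [exact Vfin | apply interval_finite] |].
    intros z Hz; unfold setD, setU, I; destruct (classic (V z)); [tauto |].
    destruct (Hcov z Hz) as [? | [? | ?]]; tauto.
Qed.
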